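(* Let $\mu$ be a partition with at most $n$ parts and let $T_\mu$ be the tableau of shape $\mu$ whose cells in the $k$-th row are all filled with the number $k$. Then $T_\mu$ is a semistandard C-tableau and $T_\mu\cdot\emptyset=\mu$. Conversely, if $J$ is a semistandard C-tableau of shape $\mu$ such that $J\cdot\emptyset$ is defined and equals a partition $\lambda$, then $\lambda=\mu$ and $J=T_\mu$. Moreover, if $\mu\neq\emptyset$, then every intermediate diagram occurring during the computation of $T_\mu\cdot\emptyset$ (after the first step) is nonempty.
   Context: Fix $n\ge1$ and the ordered alphabet $1<2<\cdots<n<\bar n<\cdots<\bar 1$, where $\bar k := 2n+1-k$ for $1\le k\le n$. For a column $J$ (a strictly increasing sequence of letters) and a letter $a\in J$, $\mathrm{pos}_J(a)$ is the position of $a$ in $J$ counted from the top, and $|J|$ is the length of $J$. A semistandard C-tableau of shape $\mu$ (a Young diagram with at most $n$ rows) is a filling of $\mu$ by letters with rows weakly increasing and columns strictly increasing, such that: (C-1) for every column $J$ and every $k\le n$ with $k,\bar k\in J$, $\mathrm{pos}_J(k)+(|J|+1-\mathrm{pos}_J(\bar k))\le k$; (C-2) for every pair of adjacent columns $L$ (left), $R$ (right) and every $1\le a\le b\le n$ with $a\in L$, $\bar a\in R$, $b,\bar b\in L\cup R$, if either $\mathrm{pos}_L(a)\le\mathrm{pos}_R(b)<\mathrm{pos}_R(\bar b)\le\mathrm{pos}_R(\bar a)$ or $\mathrm{pos}_L(a)\le\mathrm{pos}_L(b)<\mathrm{pos}_L(\bar b)\le\mathrm{pos}_R(\bar a)$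 (an $(a,b)$-configuration), then $\mathrm{pos}(b)-\mathrm{pos}(a)+\mathrm{pos}(\bar a)-\mathrm{pos}(\bar b)<b-a$. These tableaux form the crystal basis of the irreducible $Sp(2n,\mathbb{R})$-representation $V_\mu$. Action of a tableau $J$ on a partition $\lambda$ (at most $n$ parts): read the columns of $J$ from the rightmost to the leftmost, each column from top to bottom; a letter $k\le n$ adds one cell to row $k$, a letter $\bar k$ removes one cell from row $k$; if at any step the result is not a Young diagram (partition with at most $n$ rows), the action is undefined. If all steps succeed with final diagram $\nu$, we write $J\cdot\lambda=\nu$. $\emptyset$ denotes the empty partition (trivial representation). *)

From mathcomp Require Import all_boot.
Set Implicit Arguments. Unset Strict Implicit. Unset Printing Implicit Defensive.

(* Letters of the alphabet 1 < 2 < ... < n < bar n < ... < bar 1 are encoded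
   as the naturals 1..2n, with bar k = 2n+1-k (as in the paper). *)
Definition bar (n k : nat) : nat := (2 * n).+1 - k.

(* A partition with at most n parts: a weakly decreasing sequence of exactly
   n naturals (padded with zeros). The empty partition is nseq n 0. *)
Definition is_part (n : nat) (mu : seq nat) : bool :=
  (size mu == n) && sorted geq mu.

Definition empty_part (n : nat) : seq nat := nseq n 0.

(* A tableau is the list of its columns from left to right, each column read
   from top to bottom. *)
Definition tableau := seq (seq nat).

Definition colsize (mu : seq nat) (j : nat) : nat := count (fun m => j < m) mu.

Definition has_shape (mu : seq nat) (T : tableau) : Prop :=
  size T = head 0 mu /\ forall j, j < size T -> size (nth [::] T j) = colsize mu j.

Definition pos (J : seq nat) (a : nat) : nat := (index a J).+1.

Definition semistandard (n : nat) (mu : seq nat) (T : tableau) : Prop :=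
  has_shape mu T /\
  (forall J, J \in T -> forall x, x \in J -> 1 <= x <= 2 * n) /\
  (forall J, J \in T -> sorted ltn J) /\
  (forall j, j.+1 < size T -> forall i, i < size (nth [::] T j.+1) ->
      nth 0 (nth [::] T j) i <= nth 0 (nth [::] T j.+1) i).

Definition C1 (n : nat) (T : tableau) : Prop :=
  forall J, J \in T -> forall k, 1 <= k <= n -> k \in J -> bar n k \in J ->
    pos J k + ((size J).+1 - pos J (bar n k)) <= k.

(* (C-2); the inequality pos(b)-pos(a)+pos(bar a)-pos(bar b) < b-a is written
   with all terms moved to have nonnegative sides (equivalent over Z). *)
Definition C2 (n : nat) (T : tableau) : Prop :=
  forall j, j.+1 < size T ->
  let L := nth [::] T j in let R := nth [::] T j.+1 in
  forall a b, 1 <= a -> a <= b -> b <= n -> a \in L -> bar n a \in R ->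
    (b \in R -> bar n b \in R ->
       pos L a <= pos R b -> pos R b < pos R (bar n b) ->
       pos R (bar n b) <= pos R (bar n a) ->
       pos R b + pos R (bar n a) + a < b + pos L a + pos R (bar n b)) /\
    (b \in L -> bar n b \in L ->
       pos L a <= pos L b -> pos L b < pos L (bar n b) ->
       pos L (bar n b) <= pos R (bar n a) ->
       pos L b + pos R (bar n a) + a < b + pos L a + pos L (bar n b)).

Definition C_tableau (n : nat) (mu : seq nat) (T : tableau) : Prop :=
  semistandard n mu T /\ C1 n T /\ C2 n T.

Definition Tmu (mu : seq nat) : tableau :=
  mkseq (fun j => iota 1 (colsize mu j)) (head 0 mu).

Definition act_letter (n : nat) (x : nat) (lam : seq nat) : option (seq nat) :=
  let res :=
    if (1 <= x <= n) then
      Some (set_nth 0 lam x.-1 (nth 0 lam x.-1).+1)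
    else if (n < x <= 2 * n) then
      let k := bar n x in
      if nth 0 lam k.-1 == 0 then None
      else Some (set_nth 0 lam k.-1 (nth 0 lam k.-1).-1)
    else None in
  match res with
  | Some nu => if is_part n nu then Some nu else None
  | None => None
  end.

Definition act_word (n : nat) (w : seq nat) (lam : seq nat) : option (seq nat) :=
  foldl (fun o x => match o with Some l => act_letter n x l | None => None end)
        (Some lam) w.

Definition reading (T : tableau) : seq nat := flatten (rev T).

Definition act (n : nat) (T : tableau) (lam : seq nat) : option (seq nat) :=
  act_word n (reading T) lam.

From mathcomp Require Import all_boot zify.
Set Implicit Arguments. Unset Strict Implicit. Unset Printing Implicit Defensive.

(** The reading word of [T_mu] consists of unbarred letters only, column [c]
    contributing [1, ..., c]: acting on the empty diagram it adds the columns
    of [mu] one after the other, and each prefix of length [i] yields [i] cells.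

    Conversely, [J] is recovered column by column from the right. Once the
    columns to the right of column [j] are those of [T_mu], the diagram met by
    column [j] has no cell in rows [>= d], [d] the length of column [j+1]. The
    row condition forces the first [d] entries of column [j] to be [1, ..., d];
    below them, an unbarred entry larger than its row index would add a cell
    under an empty row, and a barred entry [bar k] could only remove a cell from
    a row [k] just filled by this same column, which (C-1) forbids. *)

Lemma is_part_size n l : is_part n l -> size l = n.
Proof. by case/andP=> /eqP. Qed.

Lemma is_part_nth n l k : is_part n l -> k.+1 < n -> nth 0 l k.+1 <= nth 0 l k.
Proof. by case/andP=> /eqP sz /(sortedP 0) geq_l lt_k; apply: geq_l; rewrite sz. Qed.

Lemma is_partP n l : size l = n ->
  (forall k, k.+1 < n -> nth 0 l k.+1 <= nth 0 l k) -> is_part n l.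
Proof. by move=> sz geq_l; rewrite /is_part sz eqxx; apply/(sortedP 0); rewrite sz. Qed.

Lemma empty_part_is_part n : is_part n (empty_part n).
Proof. by apply: is_partP => [|k _]; rewrite ?size_nseq // !nth_nseq; case: ifP. Qed.

Section Action.
Variable n : nat.

Lemma act_word_cat s1 s2 lam :
  act_word n (s1 ++ s2) lam = obind (act_word n s2) (act_word n s1 lam).
Proof.
rewrite /act_word foldl_cat; case: (foldl _ (Some lam) s1) => //=.
by elim: s2.
Qed.

Lemma act_word_cons x w lam :
  act_word n (x :: w) lam = obind (act_word n w) (act_letter n x lam).
Proof. exact: (act_word_cat [:: x]). Qed.

Lemma act_word_prefix s1 s2 lam nu :
  act_word n (s1 ++ s2) lam = Some nu -> exists mid, act_word n s1 lam = Some mid.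
Proof. by rewrite act_word_cat; case: act_word => [mid|] //; exists mid. Qed.

Lemma act_letter_Some x lam nu : act_letter n x lam = Some nu ->
  is_part n nu /\
  ([/\ 1 <= x <= n & nu = set_nth 0 lam x.-1 (nth 0 lam x.-1).+1]
   \/ [/\ n < x <= 2 * n & 0 < nth 0 lam (bar n x).-1]).
Proof.
rewrite /act_letter; case: ifP => [x_unbarred|_] /=.
  by case: ifP => // nu_part [<-]; split=> //; left.
case: ifP => // x_barred; case: ifP => //= row_x.
by case: ifP => // nu_part [<-]; split=> //; right; rewrite lt0n row_x.
Qed.

Lemma act_letter_unbarred x lam nu : act_letter n x lam = Some nu ->
  1 < x <= n -> nth 0 lam x.-1 < nth 0 lam x.-2.
Proof.
case/act_letter_Some=> nu_part [[_ nu_def]|[]]; last by lia.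
move=> x_range; subst nu; have := is_part_nth nu_part (k := x.-2); rewrite !nth_set_nth /=.
have -> : (x.-2).+1 = x.-1 by lia.
by rewrite eqxx ifN_eqC; [apply; lia | lia].
Qed.

Lemma act_letter_barred x lam nu : act_letter n x lam = Some nu -> n < x ->
  x <= 2 * n /\ 0 < nth 0 lam (bar n x).-1.
Proof. by case/act_letter_Some=> _ [[]|[]]; [lia | case/andP]. Qed.

Lemma act_word_unbarred_sumn w lam nu : all (fun x => x <= n) w ->
  act_word n w lam = Some nu -> sumn nu = sumn lam + size w.
Proof.
elim: w lam => [|x w IHw] lam /=; first by move=> _ [<-]; rewrite addn0.
case/andP=> x_le w_le; rewrite act_word_cons; case act_x: act_letter => [l|] //= act_w.
rewrite (IHw l w_le act_w).
case: (act_letter_Some act_x) => _ [[_ ->]|[]]; last by lia.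
rewrite sumn_set_nth0; lia.
Qed.

End Action.

Definition add_columns n (cs l : seq nat) : seq nat :=
  mkseq (fun k => nth 0 l k + count (fun c => k < c) cs) n.

Lemma add_columns_is_part n cs l : is_part n l -> is_part n (add_columns n cs l).
Proof.
move=> l_part; apply: is_partP => [|k lt_k]; first by rewrite size_mkseq.
rewrite !nth_mkseq ?(ltnW lt_k) //; apply: leq_add; first exact: is_part_nth l_part lt_k.
by apply: sub_count => c /= /ltnW.
Qed.

Lemma add_columns_nil n l : is_part n l -> add_columns n [::] l = l.
Proof.
move=> /is_part_size sz; apply: (@eq_from_nth _ 0) => [|k]; rewrite size_mkseq ?sz //.
by move=> lt_k; rewrite nth_mkseq ?addn0.
Qed.

Lemma add_columns_cons n c cs l :
  add_columns n [:: c] (add_columns n cs l) = add_columns n (c :: cs) l.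
Proof.
apply: (@eq_from_nth _ 0) => [|k]; rewrite !size_mkseq // => lt_k.
by rewrite !nth_mkseq //=; lia.
Qed.

Lemma act_iota n c l : is_part n l -> c <= n ->
  act_word n (iota 1 c) l = Some (add_columns n [:: c] l).
Proof.
move=> l_part; elim: c => [|c IHc] le_c.
  by rewrite -[add_columns _ _ _]/(add_columns n [::] l) add_columns_nil.
have sz := is_part_size l_part.
rewrite -[c.+1]addn1 iotaD act_word_cat IHc ?(ltnW le_c) //= /act_word /= /act_letter.
rewrite ifT /=; last by lia.
have -> : set_nth 0 (add_columns n [:: c] l) (1 + c).-1
            (nth 0 (add_columns n [:: c] l) (1 + c).-1).+1 = add_columns n [:: c + 1] l.
  apply: (@eq_from_nth _ 0) => [|k]; rewrite size_set_nth !size_mkseq; first lia.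
  move=> lt_k; rewrite nth_set_nth /= !nth_mkseq; try lia.
  by case: eqP => [->|ne_k] /=; lia.
by rewrite add_columns_is_part.
Qed.

Lemma reading_cons (J : seq nat) T : reading (J :: T) = reading T ++ J.
Proof. by rewrite /reading rev_cons flatten_rcons. Qed.

Lemma reading_cat (T1 T2 : tableau) : reading (T1 ++ T2) = reading T2 ++ reading T1.
Proof. by rewrite /reading rev_cat flatten_cat. Qed.

Lemma act_iota_columns n cs l : is_part n l -> all (fun c => c <= n) cs ->
  act_word n (reading (map (iota 1) cs)) l = Some (add_columns n cs l).
Proof.
move=> l_part; elim: cs => [|c cs IHcs] /=; first by rewrite add_columns_nil.
case/andP=> le_c le_cs; rewrite reading_cons act_word_cat IHcs //=.
by rewrite act_iota ?add_columns_cons ?add_columns_is_part.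
Qed.

Lemma colsize_le n mu j : is_part n mu -> colsize mu j <= n.
Proof. by move=> /is_part_size <-; apply: count_size. Qed.

Lemma colsize_nonincreasing mu : {homo colsize mu : i j / i <= j >-> j <= i}.
Proof. by move=> i j le_ij; apply: sub_count => x /=; apply: leq_ltn_trans. Qed.

Definition conj_part (mu : seq nat) : seq nat := mkseq (colsize mu) (head 0 mu).

Lemma conj_part_sorted mu : sorted geq (conj_part mu).
Proof. exact: homo_sorted (colsize_nonincreasing mu) _ (iota_sorted 0 _). Qed.

Lemma conj_part_le n mu : is_part n mu -> all (fun c => c <= n) (conj_part mu).
Proof. by move=> mu_part; apply/allP => c /mapP [j _ ->]; apply: colsize_le mu_part. Qed.

Lemma Tmu_conj_part mu : Tmu mu = map (iota 1) (conj_part mu).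
Proof. by rewrite /Tmu /conj_part /mkseq -map_comp. Qed.

Lemma sorted_geq_le_head (s : seq nat) : sorted geq s -> all (fun x => x <= head 0 s) s.
Proof.
case: s => [|y s] //= /(order_path_min (rev_trans leq_trans)) le_y.
by rewrite leqnn.
Qed.

Lemma count_gt_eq0 (s : seq nat) j : all (fun x => x <= j) s -> count (fun x => j < x) s = 0.
Proof. by elim: s => //= x s IHs /andP [le_x /IHs ->]; rewrite ltnNge le_x. Qed.

Lemma ltn_count_sorted_geq (s : seq nat) j k : sorted geq s -> k < size s ->
  (k < count (fun x => j < x) s) = (j < nth 0 s k).
Proof.
elim: s k => [|x s IHs] k //= s_sorted lt_k.
have le_x : all (fun y => y <= x) s := order_path_min (rev_trans leq_trans) s_sorted.
case: (ltnP j x) => [lt_jx|le_xj] /=.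
  by case: k lt_k => [|k] lt_k //=; rewrite add1n ltnS IHs // (path_sorted s_sorted).
rewrite add0n count_gt_eq0; last by apply: sub_all le_x => y /= le_y; apply: leq_trans le_xj.
apply/esym/negbTE; rewrite -leqNgt.
case: k lt_k => [|k] lt_k //=; apply: leq_trans le_xj.
by apply: (allP le_x); rewrite mem_nth.
Qed.

Lemma count_conj_part n mu k : is_part n mu -> k < n ->
  count (fun c => k < c) (conj_part mu) = nth 0 mu k.
Proof.
move=> mu_part lt_k; have sz := is_part_size mu_part.
have mu_sorted : sorted geq mu by case/andP: mu_part.
rewrite count_map (eq_count (a2 := fun j => j < nth 0 mu k)); last first.
  by move=> j /=; rewrite /colsize ltn_count_sorted_geq ?sz.
have le_head : nth 0 mu k <= head 0 mu.
  by apply: (allP (sorted_geq_le_head mu_sorted)); rewrite mem_nth ?sz.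
by have := filter_iota_ltn 0 le_head; rewrite add0n -size_filter => ->; rewrite size_iota.
Qed.

Lemma act_Tmu n mu : is_part n mu -> act n (Tmu mu) (empty_part n) = Some mu.
Proof.
move=> mu_part; rewrite /act Tmu_conj_part.
rewrite act_iota_columns ?empty_part_is_part ?(conj_part_le mu_part) //; congr Some.
apply: (@eq_from_nth _ 0) => [|k]; rewrite size_mkseq ?(is_part_size mu_part) // => lt_k.
by rewrite nth_mkseq // nth_nseq lt_k (count_conj_part mu_part).
Qed.

Lemma size_Tmu mu : size (Tmu mu) = head 0 mu.
Proof. exact: size_mkseq. Qed.

Lemma nth_Tmu mu j : j < head 0 mu -> nth [::] (Tmu mu) j = iota 1 (colsize mu j).
Proof. exact: nth_mkseq. Qed.

Lemma mem_Tmu n mu J : is_part n mu -> J \in Tmu mu -> exists2 c, c <= n & J = iota 1 c.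
Proof.
move=> mu_part; rewrite Tmu_conj_part => /mapP [c c_in ->].
by exists c => //; apply: (allP (conj_part_le mu_part)).
Qed.

Lemma bar_notin_Tmu n mu J k : is_part n mu -> J \in Tmu mu -> k <= n -> bar n k \notin J.
Proof. by move=> mu_part /(mem_Tmu mu_part) [c le_c ->] le_k; rewrite mem_iota /bar; lia. Qed.

Lemma Tmu_C_tableau n mu : is_part n mu -> C_tableau n mu (Tmu mu).
Proof.
move=> mu_part; split; [split; [|split; [|split]] | split].
- split=> [|j]; rewrite size_Tmu // => lt_j.
  by rewrite nth_Tmu // size_iota.
- by move=> J /(mem_Tmu mu_part) [c le_c ->] x; rewrite mem_iota; lia.
- by move=> J /(mem_Tmu mu_part) [c _ ->]; apply: iota_ltn_sorted.
- move=> j; rewrite size_Tmu => lt_j i.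
  rewrite (nth_Tmu lt_j) nth_Tmu ?(ltnW lt_j) // size_iota => lt_i.
  by rewrite !nth_iota // (leq_trans lt_i (colsize_nonincreasing mu _)).
- by move=> J J_in k /andP [_ le_k] _; rewrite (negbTE (bar_notin_Tmu mu_part J_in le_k)).
- move=> j lt_j /= a b _ le_ab le_b _.
  have R_in : nth [::] (Tmu mu) j.+1 \in Tmu mu by rewrite mem_nth.
  by rewrite (negbTE (bar_notin_Tmu mu_part R_in (leq_trans le_ab le_b))).
Qed.

Lemma path_ltn_nth m (s : seq nat) i : path ltn m s -> i < size s -> m + i < nth 0 s i.
Proof.
elim: s m i => [|x s IHs] m [|i] //= /andP [lt_mx s_path] lt_i; first by rewrite addn0.
by have := IHs x i s_path lt_i; lia.
Qed.

(* [C] is a column read on the diagram [lam], [d] the length of the column to its right. *)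
Section ColumnAction.
Variables (n d : nat) (C lam nu : seq nat).
Hypotheses (lam_part : is_part n lam) (lam_short : forall k, d <= k -> nth 0 lam k = 0).
Hypotheses (C_incr : path ltn 0 C) (C_size : size C <= n).
Hypothesis C_C1 : forall k, 1 <= k <= n -> k \in C -> bar n k \in C ->
  pos C k + ((size C).+1 - pos C (bar n k)) <= k.
Hypothesis C_row : forall i, i < d -> i < size C -> nth 0 C i <= i.+1.
Hypothesis C_act : act_word n C lam = Some nu.

Lemma column_entry i : i < size C -> take i C = iota 1 i -> nth 0 C i = i.+1.
Proof.
move=> lt_i C_prefix; set x := nth 0 C i.
have lt_ix : i < x by have := path_ltn_nth C_incr lt_i.
apply/eqP; rewrite eqn_leq lt_ix andbT.
have [lt_id|le_di] := ltnP i d; first exact: C_row.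
set st := add_columns n [:: i] lam.
have [mid act_x] : exists mid, act_letter n x st = Some mid.
  have [mid] : exists mid, act_word n (take i.+1 C) lam = Some mid.
    by apply: (act_word_prefix (s2 := drop i.+1 C)); rewrite cat_take_drop; apply: C_act.
  rewrite (take_nth 0 lt_i) C_prefix -cats1 act_word_cat act_iota //=; last by lia.
  by rewrite act_word_cons; case: act_letter => //= mid' _; exists mid'.
have st_short k : i <= k -> nth 0 st k = 0.
  move=> le_ik; have [lt_kn|le_nk] := ltnP k n; last by rewrite nth_default ?size_mkseq.
  by rewrite nth_mkseq //= lam_short ?(leq_trans le_di) // ltnNge le_ik.
have [le_xn|lt_nx] := leqP x n.
  rewrite leqNgt; apply/negP => lt_Si_x.
  by have := act_letter_unbarred act_x; rewrite (st_short x.-2) ?ltn0 //; lia.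
have [le_x2n row_pos] := act_letter_barred act_x lt_nx.
set k := bar n x in row_pos.
have lt_ki : k.-1 < i by rewrite ltnNge; apply: contraTN row_pos => /st_short ->.
have k_range : 1 <= k <= n by rewrite /k /bar; lia.
have C_uniq : uniq C := sorted_uniq ltn_trans ltnn (path_sorted C_incr).
have C_k : nth 0 C k.-1 = k by rewrite -(nth_take 0 lt_ki) C_prefix nth_iota; lia.
have lt_k_size : k.-1 < size C by apply: ltn_trans lt_i.
have bar_k : bar n k = x by rewrite /k /bar; lia.
have pos_k : pos C k = k by rewrite /pos -{1}C_k index_uniq //; lia.
have pos_x : pos C x = i.+1 by rewrite /pos index_uniq.
have k_in : k \in C by rewrite -C_k mem_nth.
have x_in : x \in C by rewrite mem_nth.
by have := C_C1 k_range k_in; rewrite bar_k pos_k pos_x => /(_ x_in); lia.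
Qed.

Lemma column_iota : C = iota 1 (size C).
Proof.
suff C_prefix i : i <= size C -> take i C = iota 1 i by rewrite -C_prefix ?take_size.
elim: i => [|i IHi] lt_i; first by rewrite take0.
have C_prefix := IHi (ltnW lt_i).
by rewrite (take_nth 0 lt_i) C_prefix column_entry // -cats1 -[i.+1]addn1 iotaD add1n addn1.
Qed.

End ColumnAction.

Lemma nth_add_columns_empty_eq0 n cs d k : all (fun c => c <= d) cs -> d <= k ->
  nth 0 (add_columns n cs (empty_part n)) k = 0.
Proof.
move=> le_cs le_dk; have [lt_kn|le_nk] := ltnP k n; last by rewrite nth_default ?size_mkseq.
rewrite nth_mkseq // nth_nseq lt_kn count_gt_eq0 //.
by apply: sub_all le_cs => c /= /leq_trans; apply.
Qed.

Lemma act_column_prefix n J lam nu j : act n J lam = Some nu -> j < size J ->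
  exists mid nu', act n (drop j.+1 J) lam = Some mid /\ act_word n (nth [::] J j) mid = Some nu'.
Proof.
move=> J_act lt_j; move: J_act.
rewrite /act -{1}(cat_take_drop j J) (drop_nth [::] lt_j) reading_cat reading_cons.
case/act_word_prefix=> nu'; rewrite act_word_cat; case: act_word => [mid|] //= act_C.
by exists mid, nu'.
Qed.

Lemma C_tableau_column n mu J lam j : is_part n mu -> C_tableau n mu J ->
  act n J (empty_part n) = Some lam -> j < head 0 mu ->
  drop j.+1 J = drop j.+1 (Tmu mu) -> nth [::] J j = nth [::] (Tmu mu) j.
Proof.
move=> mu_part [[[J_size J_cols] [J_letters [J_sorted J_rows]]] [J_C1 _]] J_act lt_j J_right.
set cs := conj_part mu; set C := nth [::] J j; set d := nth 0 cs j.+1.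
have C_in : C \in J by rewrite mem_nth ?J_size.
have C_size : size C = colsize mu j by apply: J_cols; rewrite J_size.
have lt_jJ : j < size J by rewrite J_size.
have [mid [nu [act_right act_C]]] := act_column_prefix J_act lt_jJ.
have right_le : all (fun c => c <= n) (drop j.+1 cs).
  by apply/allP => c /mem_drop; apply: (allP (conj_part_le mu_part)).
have mid_def : mid = add_columns n (drop j.+1 cs) (empty_part n).
  apply: Some_inj; rewrite -act_right J_right Tmu_conj_part -map_drop.
  by rewrite /act act_iota_columns ?empty_part_is_part.
have C_incr : path ltn 0 C.
  have := J_sorted C C_in; have := J_letters C C_in.
  by case: (C) => //= x s C_range ->; rewrite andbT; have := C_range x; rewrite inE eqxx; lia.
rewrite nth_Tmu // -C_size; apply: (column_iota (d := d) _ _ C_incr _ _ _ act_C).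
- by rewrite mid_def; apply/add_columns_is_part/empty_part_is_part.
- move=> k le_dk; rewrite mid_def (nth_add_columns_empty_eq0 _ _ le_dk) //.
  have right_sorted : sorted geq (drop j.+1 cs) by apply/drop_sorted/conj_part_sorted.
  by have := sorted_geq_le_head right_sorted; rewrite -nth0 nth_drop addn0.
- by rewrite C_size (colsize_le _ mu_part).
- exact: J_C1.
- move=> i lt_id lt_iC.
  have lt_j1 : j.+1 < head 0 mu.
    by rewrite ltnNge; apply: contraTN lt_id => le_m; rewrite /d nth_default // size_mkseq.
  have C'_def : nth [::] J j.+1 = iota 1 (colsize mu j.+1).
    by rewrite -[j.+1]addn0 -nth_drop J_right nth_drop addn0 nth_Tmu.
  have lt_j1J : j.+1 < size J by rewrite J_size.
  rewrite /d nth_mkseq // in lt_id.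
  by have := J_rows j lt_j1J i; rewrite C'_def size_iota nth_iota // add1n; apply.
Qed.

Lemma C_tableau_act_empty n mu J lam : is_part n mu -> C_tableau n mu J ->
  act n J (empty_part n) = Some lam -> J = Tmu mu.
Proof.
move=> mu_part J_C J_act; have J_size : size J = head 0 mu by case: J_C => [[[]]].
suff J_right k : k <= head 0 mu -> drop (head 0 mu - k) J = drop (head 0 mu - k) (Tmu mu).
  by have := J_right _ (leqnn _); rewrite subnn !drop0.
elim: k => [|k IHk] le_k; first by rewrite subn0 !drop_oversize ?size_Tmu ?J_size.
set j := head 0 mu - k.+1.
have lt_j : j < head 0 mu by rewrite /j; lia.
have J_right : drop j.+1 J = drop j.+1 (Tmu mu).
  have -> : j.+1 = head 0 mu - k by rewrite /j; lia.
  exact: IHk (ltnW le_k).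
rewrite (drop_nth [::] (_ : j < size J)) ?J_size // J_right.
rewrite (drop_nth [::] (_ : j < size (Tmu mu))) ?size_Tmu //.
by rewrite (C_tableau_column mu_part J_C J_act lt_j J_right).
Qed.

Lemma act_prefix_Tmu_nonempty n mu i : is_part n mu -> 0 < i <= size (reading (Tmu mu)) ->
  exists2 nu, act_word n (take i (reading (Tmu mu))) (empty_part n) = Some nu
            & nu <> empty_part n.
Proof.
move=> mu_part /andP [i_pos le_i].
have [nu act_prefix] : exists nu, act_word n (take i (reading (Tmu mu))) (empty_part n) = Some nu.
  apply: (act_word_prefix (s2 := drop i (reading (Tmu mu)))).
  by rewrite cat_take_drop; exact: act_Tmu.
exists nu => // nu_empty.
have letters_le : all (fun x => x <= n) (take i (reading (Tmu mu))).
  apply/allP => x /mem_take /flattenP [J]; rewrite mem_rev => /(mem_Tmu mu_part) [c le_c ->].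
  by rewrite mem_iota; lia.
have := act_word_unbarred_sumn letters_le act_prefix.
by rewrite nu_empty size_take; case: ifP; rewrite /empty_part sumn_nseq /=; lia.
Qed.

Theorem proposition3p3 (n : nat) (hn : 1 <= n) (mu : seq nat) (hmu : is_part n mu) :
  (C_tableau n mu (Tmu mu) /\ act n (Tmu mu) (empty_part n) = Some mu) /\
  (forall (J : tableau) (lam : seq nat), C_tableau n mu J ->
     act n J (empty_part n) = Some lam -> lam = mu /\ J = Tmu mu) /\
  (mu <> empty_part n ->
     forall i, 1 <= i <= size (reading (Tmu mu)) ->
       exists nu, act_word n (take i (reading (Tmu mu))) (empty_part n) = Some nu
                  /\ nu <> empty_part n).
Proof.
split; first by split; [exact: Tmu_C_tableau | exact: act_Tmu].
split.
  move=> J lam J_C J_act; have J_Tmu := C_tableau_act_empty hmu J_C J_act.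
  by split=> //; move: J_act; rewrite J_Tmu act_Tmu // => -[].
by move=> _ i /(act_prefix_Tmu_nonempty hmu) [nu]; exists nu.
Qed.
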